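(* Let $(\xi_j)_{j\ge 0}$ be independent, identically distributed random variables taking values in $\{-1,0,1\}$ with $\max_{x\in\{-1,0,1\}} \mathbb{P}(\xi_0 = x) < \frac{1}{\sqrt{3}}$, and for $n\ge 1$ let $P(z):=\sum_{j=0}^n \xi_j z^j$. For every algebraic integer $\alpha\neq 0$, \[\mathbb{P}(\alpha\text{ is a root of } P)\le \exp\left(-\frac{n\log 3}{2\lceil \log 3 /|\log|\alpha||\rceil}\right).\]
   Context: When $|\alpha|=1$ the right-hand side is interpreted as $1$ (the ceiling being infinite). *)

From HB Require Import structures.
From mathcomp Require Import all_boot all_order all_algebra.
From mathcomp Require Import reals sequences exp.
From mathcomp.real_closed Require Import complex.
Set Implicit Arguments. Unset Strict Implicit. Unset Printing Implicit Defensive.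
Import Order.TTheory GRing.Theory Num.Theory.
Local Open Scope ring_scope.

Definition is_alg_int (R : realType) (a : R[i]) : Prop :=
  exists p : {poly int}, p \is monic /\ root (map_poly (fun z : int => z%:~R) p) a.

Definition cmod (R : realType) (a : R[i]) : R :=
  Num.sqrt (complex.Re a ^+ 2 + complex.Im a ^+ 2).

Definition val3 (k : 'I_3) : int := (k%:Z - 1)%R.

Definition evalP (R : realType) (n : nat) (xi : {ffun 'I_n.+1 -> 'I_3}) (a : R[i]) : R[i] :=
  \sum_(j < n.+1) (val3 (xi j))%:~R * a ^+ j.

(* Probability that a is a root of P, when xi_0..xi_n are i.i.d. with law p on
   {-1,0,1} (p k = P(xi_0 = val3 k)): the joint law is the product law. *)
Definition prob_root (R : realType) (p : 'I_3 -> R) (n : nat) (a : R[i]) : R :=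
  \sum_(xi : {ffun 'I_n.+1 -> 'I_3} | evalP xi a == 0) \prod_(j < n.+1) p (xi j).

(* Right-hand side exp(- n log 3 / (2 ceil(log 3 / |log|a||))), read as 1 when |a| = 1. *)
Definition rhs_bound (R : realType) (n : nat) (a : R[i]) : R :=
  if cmod a == 1 then 1
  else expR (- (n%:R * ln (3 : R)) /
             (2 * (Num.ceil (ln (3 : R) / `|ln (cmod a)|))%:~R)).

(* Put k := ceil(log 3 / |log |a||), so that |a^k| >= 3 or |a^k| <= 1/3.
   If two outcomes are both roots and agree off the positions 0, k, 2k, ...,
   their difference is a polynomial in a^k with coefficients in [-2, 2]
   vanishing at a^k; an extreme coefficient would dominate all the others, so
   the polynomial is zero.  Hence the event "a is a root" is determined by the
   coordinates off these n %/ k + 1 positions, and each of them costs a factor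
   max_x P(xi_0 = x) < 1/sqrt 3. *)

From HB Require Import structures.
From mathcomp Require Import all_boot all_order all_algebra.
From mathcomp Require Import reals sequences exp.
From mathcomp.real_closed Require Import complex.
From mathcomp Require Import lra zify.
Import Order.TTheory GRing.Theory Num.Theory.
Local Open Scope ring_scope.
Local Open Scope complex_scope.

Section ComplexModulus.
Variable R : realType.
Implicit Types x y : R[i].

Lemma normcE x : `|x| = (cmod x)%:C.
Proof. by rewrite normc_def. Qed.

Lemma cmod_ge0 x : 0 <= cmod x.
Proof. exact: sqrtr_ge0. Qed.

Lemma cmod_eq0 x : (cmod x == 0) = (x == 0).
Proof. by rewrite -(inj_eq (@complexI R)) -normcE normr_eq0. Qed.

Lemma cmod_gt0 x : (0 < cmod x) = (x != 0).
Proof. by rewrite lt_def cmod_eq0 cmod_ge0 andbT. Qed.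

Lemma cmodN x : cmod (- x) = cmod x.
Proof. by apply: (@complexI R); rewrite -!normcE normrN. Qed.

Lemma cmodM x y : cmod (x * y) = cmod x * cmod y.
Proof. by apply: (@complexI R); rewrite -normcE normrM !normcE rmorphM. Qed.

Lemma cmodX x m : cmod (x ^+ m) = cmod x ^+ m.
Proof. by apply: (@complexI R); rewrite -normcE normrX normcE rmorphXn. Qed.

Lemma cmodV x : cmod x^-1 = (cmod x)^-1.
Proof. by apply: (@complexI R); rewrite -normcE normfV normcE fmorphV. Qed.

Lemma cmod_int (z : int) : cmod (z%:~R : R[i]) = `|z|%:~R.
Proof. by apply: (@complexI R); rewrite -normcE -intr_norm rmorph_int. Qed.

Lemma cmod_sum (I : finType) (F : I -> R[i]) :
  cmod (\sum_i F i) <= \sum_i cmod (F i).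
Proof.
rewrite -lecR -normcE rmorph_sum; apply: le_trans (ler_norm_sum _ _ _) _.
by apply: ler_sum => i _; rewrite normcE.
Qed.

End ComplexModulus.

Section SmallDigits.
Variable R : realType.
Implicit Types (b : R[i]) (x : R).

Lemma cmod_digits_le m (d : 'I_m -> int) b : (forall i, `|d i| <= 2) ->
  cmod (\sum_(i < m) (d i)%:~R * b ^+ i) <= 2 * \sum_(i < m) cmod b ^+ i.
Proof.
move=> hd; apply: le_trans (cmod_sum _ _ (fun i => (d i)%:~R * b ^+ i)) _.
rewrite mulr_sumr.
apply: ler_sum => i _; rewrite cmodM cmodX cmod_int.
by apply: ler_wpM2r; [exact/exprn_ge0/cmod_ge0 | rewrite -[2 : R]/(2%:~R : R) ler_int].
Qed.

Lemma geom_sum_le x m : 3 <= x -> 2 * \sum_(i < m) x ^+ i <= x ^+ m - 1.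
Proof.
move=> hx; elim: m => [|m IH]; first by rewrite big_ord0 expr0; lra.
have : 1 <= x ^+ m by apply: exprn_ege1; lra.
rewrite big_ord_recr exprS /=; nra.
Qed.

(* With digits in [-2, 2], the leading term dominates once [3 <= |b|]. *)
Lemma digits_eq0_large m (d : 'I_m -> int) b :
  (forall i, `|d i| <= 2) -> 3 <= cmod b ->
  \sum_(i < m) (d i)%:~R * b ^+ i = 0 -> forall i, d i = 0.
Proof.
elim: m d => [|m IH] d hd hb; first by move=> _ [].
rewrite big_ord_recr /= => hs.
set low := \sum_(i < m) _ in hs.
have dm0 : d ord_max = 0.
  apply/eqP/negPn/negP => dm_neq0.
  have lead_ge : cmod b ^+ m <= cmod ((d ord_max)%:~R * b ^+ m).
    rewrite cmodM cmod_int cmodX ler_peMl ?exprn_ge0 ?cmod_ge0 //.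
    by rewrite ler1z -gtz0_ge1 normr_gt0.
  have low_le := cmod_digits_le _ (fun i => d (widen_ord (leqnSn m) i)) b (fun i => hd _).
  have := geom_sum_le _ m hb.
  move/eqP: hs; rewrite addr_eq0 => /eqP lead_eq; rewrite -/low lead_eq cmodN in low_le.
  lra.
move: hs; rewrite dm0 mul0r addr0 => /(IH _ (fun i => hd _) hb) low0 i.
case: (unliftP ord_max i) => [j ->|->//].
by rewrite -(low0 j); congr d; apply: val_inj; exact: lift_max.
Qed.

Lemma digits_eq0 m (d : 'I_m -> int) b :
  (forall i, `|d i| <= 2) -> b != 0 -> 3 <= cmod b \/ 3 * cmod b <= 1 ->
  \sum_(i < m) (d i)%:~R * b ^+ i = 0 -> forall i, d i = 0.
Proof.
move=> hd b0 [hb|hb]; first exact: digits_eq0_large.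
(* Reversing the digits trades [b] for [b^-1], whose modulus is at least 3. *)
move=> hs i; rewrite -(rev_ordK i).
have hbV : 3 <= cmod b^-1 by rewrite cmodV -div1r ler_pdivlMr ?cmod_gt0.
have hsV : \sum_(j < m) (d (rev_ord j))%:~R * b^-1 ^+ j = 0.
  apply: (mulIf (expf_neq0 m.-1 b0)); rewrite mul0r -[RHS]hs mulr_suml.
  rewrite [RHS](reindex_inj rev_ord_inj); apply: eq_bigr => j _ /=.
  rewrite -mulrA; congr (_ * _).
  have -> : m.-1 = (j + (m - j.+1))%N by have := ltn_ord j; lia.
  by rewrite exprD mulrA -exprMn mulVf ?expr1n ?mul1r.
exact: (digits_eq0_large _ _ _ (fun j => hd _) hbV hsV (rev_ord i)).
Qed.

End SmallDigits.

Section ProductMass.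
Variables (R : numDomainType) (I T : finType) (t0 : T).
Variables (w : I -> T -> R) (c : R) (S : {set I}).
Hypothesis w_ge0 : forall i t, 0 <= w i t.
Hypothesis c_ge0 : 0 <= c.
Hypothesis w_leS : forall i t, i \in S -> w i t <= c.
Hypothesis w_sum_le1 : forall i, i \notin S -> \sum_t w i t <= 1.

(* Freezing the coordinates in [S] at [t0] costs at most a factor [c] per
   coordinate, and is injective on a set determined by its values off [S]. *)
Lemma mass_determined_offS_le (A : {set {ffun I -> T}}) :
  {in A &, forall f g : {ffun I -> T}, (forall i, i \notin S -> f i = g i) -> f = g} ->
  \sum_(f in A) \prod_i w i (f i) <= c ^+ #|S|.
Proof.
move=> detA.
pose freeze (f : {ffun I -> T}) : {ffun I -> T} := [ffun i => if i \in S then t0 else f i].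
pose w' i t := if i \in S then (t == t0)%:R else w i t.
have w'_ge0 i t : 0 <= w' i t by rewrite /w'; case: ifP.
have freeze_le (f : {ffun I -> T}) : \prod_i w i (f i) <= c ^+ #|S| * \prod_i w' i (freeze f i).
  rewrite (bigID (mem S)) [X in _ * X](bigID (mem S)) /=.
  rewrite [X in _ * (X * _)]big1 => [|i iS]; last by rewrite /w' /freeze ffunE iS eqxx.
  rewrite mul1r [X in _ <= _ * X](eq_bigr (fun i => w i (f i))) => [|i /negbTE iNS].
    apply: ler_wpM2r; first exact: prodr_ge0.
    by rewrite -prodr_const; apply: ler_prod => i iS; rewrite w_ge0 w_leS.
  by rewrite /w' /freeze ffunE iNS.
have freeze_inj : {in A &, injective freeze}.
  move=> f g fA gA /ffunP eq_fg; apply: detA => // i /negbTE iNS.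
  by have := eq_fg i; rewrite !ffunE iNS.
apply: (le_trans (ler_sum _ (fun f _ => freeze_le f))).
rewrite -mulr_sumr -[X in _ <= X]mulr1; apply: ler_wpM2l; first exact: exprn_ge0.
rewrite -(big_imset (fun g : {ffun I -> T} => \prod_i w' i (g i)) freeze_inj) /=.
apply: (@le_trans _ _ (\sum_(g : {ffun I -> T}) \prod_i w' i (g i))).
  rewrite [X in _ <= X](bigID (mem (freeze @: A))) /= lerDl.
  by apply: sumr_ge0 => g _; exact: prodr_ge0.
rewrite -bigA_distr_bigA /=; apply: prodr_ile1 => i _.
apply/andP; split; first by apply: sumr_ge0 => j _; exact: w'_ge0.
rewrite /w'; have [_|/w_sum_le1 //] := boolP (i \in S).
by rewrite (bigD1 t0) //= eqxx big1 ?addr0 // => t /negbTE ->.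
Qed.

End ProductMass.

Definition progression n k : {set 'I_n.+1} :=
  [set inord (i * k)%N | i : 'I_(n %/ k).+1 in setT].

Lemma progression_val n k (i : 'I_(n %/ k).+1) : (0 < k)%N ->
  (inord (i * k)%N : 'I_n.+1) = (i * k)%N :> nat.
Proof.
move=> k_gt0; rewrite inordK // ltnS.
by apply: leq_trans (leq_divM n k); rewrite leq_mul2r -ltnS ltn_ord orbT.
Qed.

Lemma progression_inj n k : (0 < k)%N ->
  injective (fun i : 'I_(n %/ k).+1 => inord (i * k)%N : 'I_n.+1).
Proof.
move=> k_gt0 i j /(congr1 val); rewrite /= !progression_val // => /eqP.
by rewrite eqn_pmul2r // => /eqP /val_inj.
Qed.

Lemma card_progression n k : (0 < k)%N -> #|progression n k| = (n %/ k).+1.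
Proof. by move=> k_gt0; rewrite card_imset ?cardsT ?card_ord //; exact: progression_inj. Qed.

Lemma val3_inj : injective val3.
Proof. by move=> x y /addIr [] /val_inj. Qed.

Lemma val3_subr_le2 (x y : 'I_3) : `|val3 x - val3 y| <= 2.
Proof. by case: x => [[|[|[|//]]] ?]; case: y => [[|[|[|//]]] ?]. Qed.

Lemma evalP_determined_off_progression (R : realType) n k (a : R[i]) :
  (0 < k)%N -> a != 0 -> 3 <= cmod a ^+ k \/ 3 * cmod a ^+ k <= 1 ->
  {in [set xi | evalP xi a == 0] &, forall f g : {ffun 'I_n.+1 -> 'I_3},
     (forall i, i \notin progression n k -> f i = g i) -> f = g}.
Proof.
move=> k_gt0 a0 ak_sep f g; rewrite !inE => /eqP f_root /eqP g_root agree.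
pose D j := val3 (f j) - val3 (g j).
have D_sum : \sum_(i < (n %/ k).+1) (D (inord (i * k)%N))%:~R * (a ^+ k) ^+ i = 0.
  have : evalP f a - evalP g a = 0 by rewrite f_root g_root subrr.
  rewrite /evalP -sumrB (bigID (mem (progression n k))) /=.
  rewrite [X in _ + X]big1 => [|j /agree ->]; last by rewrite subrr.
  rewrite addr0 big_imset /=; last by move=> i j _ _; exact: progression_inj.
  move=> sum0; rewrite -[RHS]sum0; apply: eq_big => [i|i _]; first by rewrite inE.
  by rewrite /D intrB mulrBl progression_val // mulnC exprM.
rewrite -cmodX in ak_sep.
have D0 := @digits_eq0 _ _ _ _ (fun i => val3_subr_le2 _ _) (expf_neq0 k a0) ak_sep D_sum.
apply/ffunP => j; have [/imsetP [i _ ->]|/agree //] := boolP (j \in progression n k).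
by apply/val3_inj/eqP; rewrite -subr_eq0 D0.
Qed.

Section RootProbability.
Variables (R : realType) (p : 'I_3 -> R).
Hypothesis p_ge0 : forall k, 0 <= p k.
Hypothesis p_sum1 : \sum_(k < 3) p k = 1.

Lemma prob_root_le_determined n (a : R[i]) (S : {set 'I_n.+1}) c :
  0 <= c -> (forall k, p k <= c) ->
  {in [set xi | evalP xi a == 0] &, forall f g : {ffun 'I_n.+1 -> 'I_3},
     (forall i, i \notin S -> f i = g i) -> f = g} ->
  prob_root p n a <= c ^+ #|S|.
Proof.
move=> c_ge0 p_le detA; rewrite /prob_root -big_set /=.
apply: (@mass_determined_offS_le _ _ _ ord0 (fun _ => p)) => //.
by move=> i _; rewrite p_sum1.
Qed.

Lemma prob_root_le1 n (a : R[i]) : prob_root p n a <= 1.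
Proof.
rewrite -(expr1n _ #|@set0 'I_n.+1|); apply: prob_root_le_determined => //.
  by move=> k; rewrite -p_sum1 (bigD1 k) //= lerDl sumr_ge0.
by move=> f g _ _ eq_fg; apply/ffunP => i; rewrite eq_fg ?in_set0.
Qed.

End RootProbability.

Section ExponentialBounds.
Variable R : realType.

Lemma pow_sep_of_ln (x : R) k : 0 < x -> ln 3 <= k%:R * `|ln x| ->
  3 <= x ^+ k \/ 3 * x ^+ k <= 1.
Proof.
move=> x_gt0 hk.
have -> : x ^+ k = expR (k%:R * ln x) by rewrite expRM_natl lnK ?posrE.
have -> : 3 = expR (ln 3) :> R by rewrite lnK ?posrE.
have [lnx_ge0|lnx_lt0] := lerP 0 (ln x).
  by left; rewrite ler_expR -(ger0_norm lnx_ge0).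
right; rewrite -expRD -[X in _ <= X]expR0 ler_expR.
by move: hk; rewrite ltr0_norm // mulrN; lra.
Qed.

Lemma inv_sqrt3E : 1 / Num.sqrt 3 = expR (- ln 3 / 2) :> R.
Proof.
have inv_ge0 : 0 <= 1 / Num.sqrt 3 :> R by rewrite divr_ge0 ?sqrtr_ge0.
apply/eqP; rewrite -(@eqrXn2 _ 2 _ _ isT inv_ge0 (expR_ge0 _)).
rewrite -expRM_natl expr_div_n expr1n sqr_sqrtr // [2 * _]mulrC divfK ?pnatr_eq0 //.
by rewrite expRN lnK ?posrE // div1r.
Qed.

Lemma inv_sqrt3_pow_le n m k : (0 < k)%N -> (n <= m * k)%N ->
  (1 / Num.sqrt 3) ^+ m <= expR (- (n%:R * ln 3) / (2 * k%:R)) :> R.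
Proof.
move=> k_gt0 n_le; rewrite inv_sqrt3E -expRM_natl ler_expR.
have ln3_gt0 : 0 < ln 3 :> R by rewrite ln_gt0 // (ltr_nat R 1 3).
have k_gt0R : 0 < k%:R :> R by rewrite ltr0n.
have : n%:R <= m%:R * k%:R :> R by rewrite -natrM ler_nat.
rewrite ler_pdivlMr ?mulr_gt0 //; nra.
Qed.

End ExponentialBounds.

Theorem lemma1p5 (R : realType) (p : 'I_3 -> R)
  (p_ge0 : forall k, 0 <= p k)
  (p_sum1 : \sum_(k < 3) p k = 1)
  (p_max : forall k, p k < 1 / Num.sqrt 3)
  (n : nat) (hn : (1 <= n)%N)
  (a : R[i]) (ha_int : is_alg_int a) (ha0 : a != 0) :
  prob_root p n a <= rhs_bound n a.
Proof.
rewrite /rhs_bound; case: eqP => [_|a_neq1]; first exact: prob_root_le1.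
have a_gt0 : 0 < cmod a by rewrite cmod_gt0.
have lna_gt0 : 0 < `|ln (cmod a)| by rewrite normr_gt0 ln_eq0 //; apply/eqP.
set y := ln 3 / `|ln (cmod a)|.
have y_gt0 : 0 < y by rewrite divr_gt0 // ln_gt0 // (ltr_nat R 1 3).
have ceil_y_gt0 : 0 < Num.ceil y by rewrite ceil_gt0.
set k := `|Num.ceil y|%N.
have k_gt0 : (0 < k)%N by rewrite absz_gt0 gt_eqF.
have kE : (Num.ceil y)%:~R = k%:R :> R by rewrite -[in LHS](gez0_abs (ltW ceil_y_gt0)).
have y_le_k : y <= k%:R by rewrite -kE ceil_ge.
rewrite kE; apply: (le_trans _ (inv_sqrt3_pow_le R n _ k k_gt0 (ltnW (ltn_ceil n k_gt0)))).
rewrite -(card_progression n _ k_gt0).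
apply: prob_root_le_determined => //.
- by rewrite divr_ge0 ?sqrtr_ge0.
- by move=> j; exact: ltW.
apply: evalP_determined_off_progression k_gt0 ha0 _.
apply: pow_sep_of_ln a_gt0 _.
by rewrite -ler_pdivrMr.
Qed.
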